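(* Let $m,n\ge1$ and let $\lambda\subseteq\nu\subseteq(n-1)^{m-1}$ be partitions. Then $\mathrm{PASM}(\nu/\lambda,m,n)$ is a face of $\mathrm{PASM}(m,n)$, of dimension $|\nu|-|\lambda|$.
   Context: A partition $\mu=(\mu_1\ge\mu_2\ge\cdots)$ is a weakly decreasing sequence of nonnegative integers with finitely many nonzero terms, $|\mu|=\sum_i\mu_i$, and $\ell(\mu)$ is its number of positive parts. We write $\mu\subseteq\nu$ if $\mu_i\le\nu_i$ for all $i$, and $\mu\subseteq a^b$ if $\ell(\mu)\le b$ and $\mu_1\le a$. An $m\times n$ partial alternating sign matrix is an $m\times n$ matrix $M$ with entries in $\{-1,0,1\}$ such that $\sum_{i'=1}^{i}M_{i'j}\in\{0,1\}$ and $\sum_{j'=1}^{j}M_{ij'}\in\{0,1\}$ for all $i,j$; $\mathrm{PASM}(m,n)$ is the convex hull in $\mathbb{R}^{mn}$ of all $m\times n$ partial alternating sign matrices. For $\mu\subseteq(n-1)^{m-1}$, the $m\times n$ matrix $M^\mu$ has entries $M^\mu_{1,\mu_1+1}=1$; for each $1\le k\le m-1$ with $\mu_k>\mu_{k+1}$, $M^\mu_{k+1,\mu_{k+1}+1}=1$ and $M^\mu_{k+1,\mu_k+1}=-1$; all other entries $0$. $\mathrm{PASM}(\nu/\lambda,m,n)$ is the convex hull in $\mathbb{R}^{mn}$ of $\{M^\mu:\lambda\subseteq\mu\subseteq\nu\}$. *)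

From HB Require Import structures.
From mathcomp Require Import all_boot all_order all_algebra.
Set Implicit Arguments. Unset Strict Implicit. Unset Printing Implicit Defensive.
Import Order.TTheory GRing.Theory Num.Theory.
Local Open Scope ring_scope.

(* Partitions are represented as sequences of their positive parts:
   mu = [:: mu_1; mu_2; ...], so mu_i = nth 0 mu (i-1) (0 beyond the length). *)
Definition is_partition (mu : seq nat) : bool :=
  sorted geq mu && all (fun x => 0 < x)%N mu.

Definition part_sub (mu nu : seq nat) : Prop :=
  forall i : nat, (nth 0 mu i <= nth 0 nu i)%N.

Definition part_in_box (a b : nat) (mu : seq nat) : bool :=
  (size mu <= b)%N && (nth 0 mu 0 <= a)%N.

Definition part_size (mu : seq nat) : nat := sumn mu.

Section Defs.
Variable R : realFieldType.
Variables m n : nat.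
Notation M := 'M[R]_(m, n).

Definition is_pasm (A : M) : Prop :=
  (forall i j, A i j = 0 \/ A i j = 1 \/ A i j = -1) /\
  (forall i j, let s := \sum_(i' < m | (i' <= i)%N) A i' j in s = 0 \/ s = 1) /\
  (forall i j, let s := \sum_(j' < n | (j' <= j)%N) A i j' in s = 0 \/ s = 1).

Definition conv (S : M -> Prop) (x : M) : Prop :=
  exists (k : nat) (p : 'I_k -> M) (w : 'I_k -> R),
    (forall i, S (p i)) /\ (forall i, 0 <= w i) /\
    \sum_i w i = 1 /\ x = \sum_i w i *: p i.

Definition PASM : M -> Prop := conv is_pasm.

(* The matrix M^mu (0-indexed rows/columns):
   row 0 has a 1 in column mu_1; for 1 <= i <= m-1 (row i+1 in 1-indexed
   convention, k = i), if mu_i > mu_{i+1} then row i has 1 in column mu_{i+1}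
   and -1 in column mu_i. *)
Definition Mmu (mu : seq nat) : M :=
  \matrix_(i < m, j < n)
    if (i == 0%N :> nat) then ((j == nth 0 mu 0 :> nat))%:R
    else if (nth 0 mu i < nth 0 mu i.-1)%N
         then ((j == nth 0 mu i :> nat))%:R - ((j == nth 0 mu i.-1 :> nat))%:R
         else 0.

Definition PASM_skew (lam nu : seq nat) : M -> Prop :=
  conv (fun X => exists mu, is_partition mu /\ part_sub lam mu /\
                            part_sub mu nu /\ X = Mmu mu).

Definition dotm (c x : M) : R := \sum_i \sum_j c i j * x i j.

Definition is_face (P F : M -> Prop) : Prop :=
  exists (c : M) (b : R),
    (forall x, P x -> dotm c x <= b) /\
    (forall x, F x <-> (P x /\ dotm c x = b)).

Definition aff_indep (s : seq M) : bool :=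
  match s with
  | [::] => true
  | x0 :: s' => free [seq x - x0 | x <- s']
  end.

Definition aff_dim (F : M -> Prop) (d : nat) : Prop :=
  (exists s : seq M, size s = d.+1 /\ (forall x, x \in s -> F x) /\ aff_indep s) /\
  (forall s : seq M, size s = d.+2 -> (forall x, x \in s -> F x) -> ~~ aff_indep s).

End Defs.

Arguments PASM R m n : clear implicits.
Arguments PASM_skew R m n lam nu : clear implicits.

(* A PASM has all its partial row and column sums in {0, 1}.  Hence the
   linear functional "sum of the first row, minus the sums of the other rows,
   minus the partial column sums C(A)_ij over the cells (i, j) outside the skew
   shape nu/lam" is at most 1 on PASM(m, n).  It equals 1 exactly when every
   row of C(A) is a unit vector e_(p i) with lam_i <= p i <= nu_i; the p i then
   decrease (the corner sums of a PASM grow downwards), so A = M^mu for the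
   partition mu = (p 0, p 1, ...).  This exhibits PASM(nu/lam, m, n) as a face.

   For the dimension, the injective linear map sending A to its corner sums
   maps M^mu to the indicator of the cells outside the Young diagram of mu.
   Differences of such indicators lie in the span of the |nu| - |lam| cells of
   nu/lam, and removing these cells one at a time produces |nu| - |lam|
   independent differences. *)

From HB Require Import structures.
From mathcomp Require Import all_boot all_order all_algebra.
From mathcomp Require Import zify lra.
Import Order.TTheory GRing.Theory Num.Theory.
Set Implicit Arguments. Unset Strict Implicit. Unset Printing Implicit Defensive.

Lemma nth_partition_geq mu i j :
  is_partition mu -> i <= j -> nth 0 mu j <= nth 0 mu i.
Proof.
move=> /andP[sorted_mu _] le_ij.
have [lt_j | ge_j] := ltnP j (size mu); last by rewrite nth_default.
apply: (sorted_leq_nth (rev_trans leq_trans) (fun x => leqnn x)) => //.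
by rewrite inE (leq_ltn_trans le_ij lt_j).
Qed.

Lemma size_part_sub lam mu :
  is_partition lam -> part_sub lam mu -> size lam <= size mu.
Proof.
move=> /andP[_ /(all_nthP 0) lam_pos] lam_mu; rewrite leqNgt; apply/negP=> lt_mu.
by have := lam_mu (size mu); rewrite (nth_default 0 (leqnn _)) leqNgt lam_pos.
Qed.

Lemma sumn_nth s K : size s <= K -> sumn s = \sum_(i < K) nth 0 s i.
Proof.
move=> le_sK; rewrite sumnE (big_nth 0) big_mkord (big_ord_widen K (nth 0 s) le_sK).
by rewrite big_mkcond; apply: eq_bigr => i _; case: ltnP => // ?; rewrite nth_default.
Qed.

Lemma nth_filter_pos s : sorted geq s -> nth 0 [seq x <- s | 0 < x] =1 nth 0 s.
Proof.
elim: s => [//|x s IHs] sorted_xs k /=.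
have [x0 | x_gt0] := posnP x; last first.
  by case: k => //= k; rewrite IHs // (path_sorted sorted_xs).
have s0 y : y \in s -> y = 0.
  by move/(allP (order_path_min (rev_trans leq_trans) sorted_xs)); rewrite x0 leqn0 => /eqP.
rewrite (eq_in_filter (a2 := pred0)) => [|y /s0 ->//]; rewrite filter_pred0 nth_nil.
case: k => [|k] /=; first by rewrite x0.
by case: (ltnP k (size s)) => [/(mem_nth 0)/s0 | /(nth_default 0)] ->.
Qed.

Lemma filter_pos_partition s : sorted geq s -> is_partition [seq x <- s | 0 < x].
Proof.
by move=> sorted_s; rewrite /is_partition (sorted_filter (rev_trans leq_trans)) ?filter_all.
Qed.

Lemma partition_remove_cell lam nu :
  is_partition lam -> is_partition nu -> part_sub lam nu -> sumn lam < sumn nu ->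
  exists nu' i, [/\ is_partition nu', part_sub lam nu',
    nth 0 nu i = (nth 0 nu' i).+1 & forall k, k != i -> nth 0 nu' k = nth 0 nu k].
Proof.
move=> lam_part nu_part lam_nu lt_sum.
have [i0 lt_i0] : exists i, nth 0 lam i < nth 0 nu i.
  case: (pickP (fun i : 'I_(size nu) => nth 0 lam i < nth 0 nu i)) => [i ? | none].
    by exists i.
  move: lt_sum; rewrite ltnNge (sumn_nth (leqnn (size nu))).
  rewrite (sumn_nth (size_part_sub lam_part lam_nu)) leq_sum // => i _.
  by rewrite leqNgt none.
have bounded i : nth 0 lam i < nth 0 nu i -> i <= size nu.
  by move=> lt_i; rewrite ltnW // ltnNge; apply: contraTN lt_i => /(nth_default 0) ->.
(* Remove the last cell of the last row where nu exceeds lam. *)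
case: (ex_maxnP (ex_intro _ i0 lt_i0) bounded) => i lt_i max_i.
pose f k := nth 0 nu k - (k == i).
have f_geq k : f k.+1 <= f k.
  have := nth_partition_geq nu_part (leqnSn k); rewrite /f.
  case: (eqVneq k i) => [-> _ | ne_ki]; last by case: eqP; lia.
  have nu_lam : nth 0 nu i.+1 <= nth 0 lam i.+1.
    by rewrite leqNgt; apply/negP => /max_i; rewrite ltnn.
  have := nth_partition_geq lam_part (leqnSn i).
  by rewrite (gtn_eqF (ltnSn i)); lia.
pose nu' := [seq x <- mkseq f (size nu) | 0 < x].
have sorted_f : sorted geq (mkseq f (size nu)).
  apply/(sortedP 0) => k; rewrite size_mkseq => lt_k.
  by rewrite (nth_mkseq _ _ lt_k) (nth_mkseq _ _ (ltnW lt_k)); apply: f_geq.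
have nth_nu' k : nth 0 nu' k = f k.
  rewrite nth_filter_pos //; case: (ltnP k (size nu)) => [lt_k | ge_k].
    by rewrite (nth_mkseq _ _ lt_k).
  by rewrite /f !nth_default ?size_mkseq.
exists nu', i; split.
- exact: filter_pos_partition.
- by move=> k; rewrite nth_nu' /f; case: eqP => [-> | _] /=; [lia | rewrite subn0].
- by rewrite nth_nu' /f eqxx /=; lia.
- by move=> k /negbTE ne_ki; rewrite nth_nu' /f ne_ki subn0.
Qed.

Lemma sumn_nth_succ s t i :
  nth 0 s i = (nth 0 t i).+1 -> (forall k, k != i -> nth 0 t k = nth 0 s k) ->
  sumn s = (sumn t).+1.
Proof.
move=> s_i t_s; have lt_i : i < size s + size t.
  by rewrite ltn_addr // ltnNge; apply/negP => /(nth_default 0); rewrite s_i.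
rewrite (sumn_nth (leq_addr (size t) _)) (sumn_nth (leq_addl (size s) _)).
rewrite (bigD1 (Ordinal lt_i)) //= [in RHS](bigD1 (Ordinal lt_i)) //= s_i addSn.
congr (_.+1 + _).
by apply: eq_bigr => k ne_ki; rewrite t_s // -val_eqE.
Qed.

Local Open Scope ring_scope.

Lemma zero_one_ge0 (R : numDomainType) (x : R) : x = 0 \/ x = 1 -> 0 <= x.
Proof. by case=> ->; rewrite ?ler01. Qed.

Lemma sum_ord_leq (R : nmodType) N i (F : nat -> R) : (i < N)%N ->
  \sum_(k < N | (k <= i)%N) F k = \sum_(0 <= k < i.+1) F k.
Proof.
move=> lt_iN; rewrite (big_nat_widen _ _ _ _ _ lt_iN) big_mkord.
by apply: eq_bigl => k; rewrite ltnS.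
Qed.

Lemma sum_ord_indicator (R : pzSemiRingType) N (P : pred nat) q :
  \sum_(l < N | P l) ((l == q :> nat))%:R = ((q < N)%N && P q)%:R :> R.
Proof.
rewrite (eq_bigr (fun l : 'I_N => if l == q :> nat then 1 else 0)) => [|l _]; last first.
  by case: eqP.
rewrite -big_mkcondr; case: (boolP ((q < N)%N && P q)) => [/andP[lt_qN Pq] | not_Pq].
  rewrite (big_pred1 (Ordinal lt_qN)) // => l /=; rewrite -val_eqE /=.
  by case: (val l =P q) => [->|]; rewrite ?Pq ?andbF.
rewrite big_pred0 // => l; apply/andP => -[Pl /eqP eq_lq].
by move: not_Pq; rewrite -eq_lq ltn_ord Pl.
Qed.

Lemma bool_subr_zero_one (R : pzRingType) (b1 b2 : bool) : (b2 -> b1) ->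
  b1%:R - b2%:R = 0 :> R \/ b1%:R - b2%:R = 1 :> R.
Proof. by case: b1 b2 => [] [] imp; rewrite ?subrr ?subr0; auto; move: (imp isT). Qed.

Lemma ltn_ord_leq N q (j : 'I_N) : ((q < N) && (q <= j))%N = (q <= j)%N.
Proof. by rewrite andb_idl // => /leq_ltn_trans; apply. Qed.

Lemma zero_one_sum1 (R : numDomainType) N (v : 'I_N -> R) :
  (forall j, v j = 0 \/ v j = 1) -> \sum_j v j = 1 ->
  exists q : 'I_N, forall j, v j = (j == q :> nat)%:R.
Proof.
move=> v01 sum_v.
have [q vq] : exists q, v q = 1.
  case: (pickP (fun j => v j == 1)) => [q /eqP | not1]; first by exists q.
  move: sum_v; rewrite big1 => [/eqP | j _]; first by rewrite eq_sym oner_eq0.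
  by case: (v01 j) => // vj; move: (not1 j); rewrite vj eqxx.
exists q => j; case: (eqVneq j q) => [-> | ne_jq]; first by rewrite eqxx vq.
have v_ge0 k : k != q -> 0 <= v k by move=> _; apply/zero_one_ge0/v01.
have rest0 : \sum_(k | k != q) v k = 0.
  by move: sum_v; rewrite (bigD1 q) //= vq -{2}[1]addr0 => /addrI.
by rewrite (psumr_eq0P v_ge0 rest0) // val_eqE (negbTE ne_jq).
Qed.

Lemma ler_sum_eq (R : numDomainType) (I : finType) (F G : I -> R) :
  (forall i, F i <= G i) -> \sum_i F i = \sum_i G i -> forall i, F i = G i.
Proof.
move=> le_FG eq_sum i; apply/eqP; rewrite eq_sym -subr_eq0; apply/eqP.
have ge0 j : true -> 0 <= G j - F j by rewrite subr_ge0.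
apply: (psumr_eq0P ge0) => //.
by rewrite sumrB -eq_sum subrr.
Qed.

Lemma prefix_sum_inj (R : zmodType) N (u v : 'I_N -> R) :
  (forall j : 'I_N, \sum_(l < N | (l <= j)%N) u l = \sum_(l < N | (l <= j)%N) v l) ->
  u =1 v.
Proof.
move=> eq_prefix; suff eq_below k (j : 'I_N) : (j < k)%N -> u j = v j.
  by move=> j; apply: (eq_below j.+1).
elim: k j => [//|k IHk] j; rewrite ltnS leq_eqVlt => /orP[/eqP eq_jk | /IHk //].
have := eq_prefix j; rewrite (bigD1 j) //= [in RHS](bigD1 j) //=.
rewrite (eq_bigr v) => [/addIr // | l /andP[le_lj ne_lj]]; apply: IHk.
by rewrite -eq_jk ltn_neqAle le_lj val_eqE ne_lj.
Qed.

Section PartialSums.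
Variables (R : realFieldType) (m n : nat).
Implicit Types (A B : 'M[R]_(m, n)) (mu : seq nat).

Definition colsum A (i : nat) (j : 'I_n) := \sum_(k < m | (k <= i)%N) A k j.
Definition rowsum A (i : 'I_m) (j : nat) := \sum_(l < n | (l <= j)%N) A i l.

Definition corner_sum A : 'M[R]_(m, n) :=
  \matrix_(i, j) \sum_(l < n | (l <= j)%N) colsum A i l.

Lemma rowsum_full A i : rowsum A i n = \sum_j A i j.
Proof. by apply: eq_bigl => l; rewrite ltnW. Qed.

Lemma colsum_inj A B : (forall (i : 'I_m) j, colsum A i j = colsum B i j) -> A = B.
Proof.
by move=> eq_colsum; apply/matrixP => i j; apply: (prefix_sum_inj (eq_colsum^~ j)).
Qed.

Lemma is_pasmP A : is_pasm A <->
  [/\ forall i j, A i j = 0 \/ A i j = 1 \/ A i j = -1,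
      forall i j, colsum A i j = 0 \/ colsum A i j = 1 &
      forall i j, rowsum A i j = 0 \/ rowsum A i j = 1].
Proof. by split=> [[? [? ?]] | [? ? ?]]. Qed.

Lemma pasm_colsum A i j : is_pasm A -> colsum A i j = 0 \/ colsum A i j = 1.
Proof. by case/is_pasmP. Qed.

Lemma pasm_rowsum A i j : is_pasm A -> rowsum A i j = 0 \/ rowsum A i j = 1.
Proof. by case/is_pasmP. Qed.

Lemma corner_sum_inj : injective corner_sum.
Proof.
move=> A B eq_corner; apply: colsum_inj => i; apply: prefix_sum_inj => j.
by have := congr1 (fun C : 'M_(m, n) => C i j) eq_corner; rewrite !mxE.
Qed.

Lemma corner_sumE A i j : corner_sum A i j = \sum_(k < m | (k <= i)%N) rowsum A k j.
Proof. by rewrite mxE exchange_big. Qed.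

Lemma corner_sum_row A (i : 'I_m) q :
  (forall j, colsum A i j = (j == q :> nat)%:R) ->
  forall j, corner_sum A i j = (q <= j)%N%:R.
Proof.
move=> colsum_i j; rewrite mxE (eq_bigr _ (fun l _ => colsum_i l)).
by rewrite (sum_ord_indicator _ _ (leq^~ j)) ltn_ord_leq.
Qed.

Fact corner_sum_is_linear : linear corner_sum.
Proof.
move=> a A B; apply/matrixP => i j; rewrite !mxE mulr_sumr -big_split.
apply: eq_bigr => l _; rewrite /colsum mulr_sumr -big_split.
by apply: eq_bigr => k _; rewrite !mxE.
Qed.
HB.instance Definition _ :=
  GRing.isLinear.Build R 'M[R]_(m, n) 'M[R]_(m, n) _ corner_sum corner_sum_is_linear.

Lemma free_map_corner_sum (X : seq 'M[R]_(m, n)) : free (map corner_sum X) = free X.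
Proof.
have lker0 : lker (linfun corner_sum) == 0%VS.
  by apply/lker0P => A B; rewrite !lfunE; apply: corner_sum_inj.
have -> : map corner_sum X = map (linfun corner_sum) X.
  by apply: eq_map => A; rewrite lfunE.
by rewrite /free size_map -limg_span limg_dim_eq // (eqP lker0) capv0.
Qed.

Lemma colsum_min A i j : colsum A i j = colsum A (minn i m.-1) j.
Proof.
apply: eq_bigl => k; have le_k : (k <= m.-1)%N by have := ltn_ord k; lia.
by rewrite leq_min le_k andbT.
Qed.

Lemma corner_sum_pasm_mono A (i i' : 'I_m) j :
  is_pasm A -> (i <= i')%N -> corner_sum A i j <= corner_sum A i' j.
Proof.
move=> A_pasm le_ii'; rewrite !corner_sumE big_mkcond [X in _ <= X]big_mkcond.
apply: ler_sum => k _.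
case: (leqP k i) => [le_ki | _]; first by rewrite (leq_trans le_ki le_ii').
by case: ifP => _; [apply: zero_one_ge0; apply: pasm_rowsum | rewrite lexx].
Qed.

Definition outside_mx mu : 'M[R]_(m, n) := \matrix_(i, j) (nth 0 mu i <= j)%N%:R.

Lemma colsum_Mmu mu i j : is_partition mu -> (i < m)%N ->
  colsum (Mmu R m n mu) i j = (j == nth 0 mu i :> nat)%:R.
Proof.
move=> mu_part lt_im.
pose u k := if k is k'.+1 then (j == nth 0 mu k' :> nat)%:R else 0 : R.
have Mmu_step (k : 'I_m) : Mmu R m n mu k j = u k.+1 - u k.
  rewrite mxE; case: k => [[|k] lt_k] /=; first by rewrite subr0.
  case: ltnP => // ge_k.
  have -> : nth 0 mu k.+1 = nth 0 mu k.
    by apply/eqP; rewrite eqn_leq ge_k nth_partition_geq.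
  by rewrite subrr.
rewrite /colsum (eq_bigr _ (fun k _ => Mmu_step k)).
by rewrite (sum_ord_leq (fun k => u k.+1 - u k) lt_im) telescope_sumr // subr0.
Qed.

Lemma rowsum_Mmu mu (i : 'I_m) j :
  let b q := ((q < n) && (q <= j))%N%:R in
  rowsum (Mmu R m n mu) i j =
    if i == 0 :> nat then b (nth 0 mu 0)
    else if (nth 0 mu i < nth 0 mu i.-1)%N then b (nth 0 mu i) - b (nth 0 mu i.-1)
    else 0.
Proof.
rewrite /rowsum; under eq_bigr do rewrite mxE.
case: ifP => _; first exact: (sum_ord_indicator _ _ (leq^~ j)).
case: ifP => _; last by rewrite big1.
by rewrite sumrB !(sum_ord_indicator _ _ (leq^~ j)).
Qed.

Lemma Mmu_pasm mu : is_partition mu -> is_pasm (Mmu R m n mu).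
Proof.
move=> mu_part; apply/is_pasmP; split=> i j.
- rewrite mxE; case: ifP => _; first by case: eqP; auto.
  case: ifP => [lt_mu | _]; last by left.
  have [-> | _] := eqVneq (j : nat) (nth 0 mu i).
    by rewrite (ltn_eqF lt_mu) subr0; auto.
  by case: eqP; rewrite sub0r ?oppr0; auto.
- rewrite colsum_min; case: (ltnP (minn i m.-1) m) => [lt_im | ge_im].
    by rewrite colsum_Mmu //; case: eqP; auto.
  by left; apply: big1 => k _; have := ltn_ord k; lia.
- rewrite rowsum_Mmu; case: ifP => _; first by case: (_ && _); auto.
  case: ifP => [lt_mu | _]; last by left.
  apply: bool_subr_zero_one => /andP[lt_n le_j].
  by rewrite (ltn_trans lt_mu lt_n) (leq_trans (ltnW lt_mu) le_j).
Qed.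

Lemma Mmu_row_sums mu : is_partition mu -> (nth 0 mu 0 < n)%N ->
  forall i : 'I_m, \sum_j Mmu R m n mu i j = (i == 0 :> nat)%:R.
Proof.
move=> mu_part mu0_lt i; rewrite -rowsum_full rowsum_Mmu.
have in_box k : ((nth 0 mu k < n) && (nth 0 mu k <= n))%N.
  have lt_n := leq_ltn_trans (nth_partition_geq mu_part (leq0n k)) mu0_lt.
  by rewrite lt_n ltnW.
by rewrite !in_box; case: ifP => // _; case: ifP => _; rewrite ?subrr.
Qed.

Lemma corner_sum_Mmu mu : is_partition mu -> corner_sum (Mmu R m n mu) = outside_mx mu.
Proof.
move=> mu_part; apply/matrixP => i j.
by rewrite (corner_sum_row (fun j => colsum_Mmu j mu_part (ltn_ord i))) mxE.
Qed.

Lemma pasm_staircase A : is_pasm A ->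
  (forall i : 'I_m, \sum_j A i j = (i == 0 :> nat)%:R) ->
  exists mu, [/\ is_partition mu, (size mu <= m)%N,
                 forall i : 'I_m, (nth 0 mu i < n)%N & A = Mmu R m n mu].
Proof.
move=> A_pasm row_sums.
have /fin_all_exists [q colsum_q] (i : 'I_m) :
    exists q : 'I_n, forall j, colsum A i j = (j == q :> nat)%:R.
  apply: zero_one_sum1 => [j | ]; first exact: pasm_colsum.
  rewrite /colsum exchange_big /= (eq_bigr _ (fun k _ => row_sums k)).
  by rewrite (sum_ord_indicator _ _ (leq^~ i)) (leq_ltn_trans (leq0n i)).
have q_mono (i i' : 'I_m) : (i <= i')%N -> (q i' <= q i)%N.
  move=> le_ii'; have := corner_sum_pasm_mono (q i) A_pasm le_ii'.
  by rewrite !(corner_sum_row (colsum_q _)) leqnn ler_nat lt0b.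
pose s := [seq val (q i) | i <- enum 'I_m].
have s_sorted : sorted geq s.
  have ord_sorted : sorted (relpre val leq) (enum 'I_m).
    by rewrite -sorted_map val_enum_ord iota_sorted.
  by rewrite sorted_map; apply: sub_sorted ord_sorted => i i'; apply: q_mono.
have nth_s (i : 'I_m) : nth 0 s i = q i.
  by rewrite (nth_map i) ?size_enum_ord // nth_ord_enum.
exists [seq x <- s | (0 < x)%N]; split.
- exact: filter_pos_partition.
- by rewrite size_filter (leq_trans (count_size _ _)) // size_map size_enum_ord.
- by move=> i; rewrite nth_filter_pos // nth_s.
- apply: colsum_inj => i j.
  by rewrite colsum_Mmu ?filter_pos_partition // nth_filter_pos // nth_s colsum_q.
Qed.

Lemma entry_notin_span (X : seq 'M[R]_(m, n)) (v : 'M[R]_(m, n)) i j :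
  (forall x, x \in X -> x i j = 0) -> v i j != 0 -> v \notin <<X>>%VS.
Proof.
move=> X_ij v_ij; apply: contra v_ij => /(coord_span (X := in_tuple X)) ->.
rewrite summxE big1 // => k _; rewrite mxE X_ij ?mulr0 //.
exact: mem_nth (ltn_ord k).
Qed.

End PartialSums.

Arguments corner_sum {R m n} A.
Arguments outside_mx {R m n} mu.

Section ConvexHull.
Variables (R : realFieldType) (m n : nat).
Implicit Types (S T : 'M[R]_(m, n) -> Prop) (c x : 'M[R]_(m, n)).

Lemma conv1 S x : S x -> conv S x.
Proof.
move=> Sx; exists 1%N, (fun=> x), (fun=> 1); rewrite !big_ord1 scale1r.
by split=> //; split=> // i; apply: ler01.
Qed.

Lemma dotm_lincomb c k (w : 'I_k -> R) (p : 'I_k -> 'M[R]_(m, n)) :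
  dotm c (\sum_i w i *: p i) = \sum_i w i * dotm c (p i).
Proof.
rewrite /dotm; under eq_bigr do under eq_bigr do rewrite summxE mulr_sumr.
under eq_bigr do rewrite exchange_big; rewrite exchange_big.
apply: eq_bigr => i _; rewrite mulr_sumr; apply: eq_bigr => a _.
by rewrite mulr_sumr; apply: eq_bigr => b _; rewrite !mxE mulrCA.
Qed.

Lemma conv_face S T c b :
  (forall x, S x -> dotm c x <= b) -> (forall x, T x <-> S x /\ dotm c x = b) ->
  is_face (conv S) (conv T).
Proof.
move=> valid T_face; exists c, b; split.
  move=> _ [k [p [w [Sp [w_ge0 [w_sum1 ->]]]]]].
  rewrite dotm_lincomb -[b]mul1r -w_sum1 mulr_suml; apply: ler_sum => i _.
  by rewrite ler_wpM2l // valid.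
move=> x; split.
  move=> [k [p [w [Tp [w_ge0 [w_sum1 ->]]]]]]; split.
    by exists k, p, w; split=> // i; case/T_face: (Tp i).
  rewrite dotm_lincomb -[b]mul1r -w_sum1 mulr_suml; apply: eq_bigr => i _.
  by case/T_face: (Tp i) => _ ->.
move=> [[k [p [w [Sp [w_ge0 [w_sum1 eq_x]]]]]] on_face].
(* Points of weight 0 are replaced by a point of positive weight. *)
have tight i : w i != 0 -> T (p i).
  have gap_ge0 j : true -> 0 <= w j * (b - dotm c (p j)).
    by move=> _; rewrite mulr_ge0 // subr_ge0 valid.
  have gap0 : \sum_j w j * (b - dotm c (p j)) = 0.
    under eq_bigr do rewrite mulrBr.
    by rewrite sumrB -mulr_suml w_sum1 mul1r -dotm_lincomb -eq_x on_face subrr.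
  move=> w_neq0; apply/T_face; split => //; apply/eqP; rewrite eq_sym -subr_eq0.
  have /eqP := @psumr_eq0P _ _ _ _ gap_ge0 gap0 i isT.
  by rewrite mulf_eq0 (negbTE w_neq0).
have [i0 w_i0] : exists i0, w i0 != 0.
  case: (pickP (fun i => w i != 0)) => [i0 ? | all0]; first by exists i0.
  move: w_sum1; rewrite big1 => [/eqP | i _]; first by rewrite eq_sym oner_eq0.
  by have /negbFE/eqP := all0 i.
exists k, (fun i => if w i == 0 then p i0 else p i), w.
split; last split=> //; last split=> //.
  by move=> i; case: eqP => [_ | /eqP]; apply: tight.
by rewrite eq_x; apply: eq_bigr => i _; case: eqP => [-> | _]; rewrite ?scale0r.
Qed.

End ConvexHull.

Section Skew.
Variables (R : realFieldType) (m n : nat) (lam nu : seq nat).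
Hypotheses (lam_part : is_partition lam) (nu_part : is_partition nu).
Hypotheses (lam_nu : part_sub lam nu) (nu_box : part_in_box n m.+1 nu).
Notation M := 'M[R]_(m.+1, n.+1).

Definition off_skew (i j : nat) := (j < nth 0 lam i)%N || (nth 0 nu i < j)%N.

Definition skew_normal : M := \matrix_(i, j)
  ((if i == 0 :> nat then 1 else -1) - \sum_(k < m.+1 | (i <= k)%N) (off_skew k j)%:R).

Lemma dotm_skew_normal (A : M) : dotm skew_normal A =
  \sum_(i < m.+1) (if i == 0 :> nat then 1 else -1) * \sum_j A i j -
  \sum_(i < m.+1) \sum_(j < n.+1 | off_skew i j) colsum A i j.
Proof.
rewrite /dotm; under eq_bigr do under eq_bigr do rewrite mxE mulrBl.
under eq_bigr do rewrite sumrB -mulr_sumr.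
rewrite sumrB; congr (_ - _).
under eq_bigr do under eq_bigr do rewrite mulr_suml.
under eq_bigr do rewrite exchange_big.
rewrite (exchange_big_dep xpredT) //=; apply: eq_bigr => k _.
rewrite exchange_big [RHS]big_mkcond; apply: eq_bigr => j _.
by rewrite -mulr_sumr mulr_natl mulrb.
Qed.

Lemma sum_first_row : \sum_(i < m.+1) ((i == 0 :> nat)%:R : R) = 1.
Proof. by rewrite (sum_ord_indicator _ _ xpredT). Qed.

Lemma pasm_row_sign (A : M) (i : 'I_m.+1) : is_pasm A ->
  (if i == 0 :> nat then 1 else -1) * \sum_j A i j <= (i == 0 :> nat)%:R.
Proof.
move=> A_pasm; have := pasm_rowsum i n.+1 A_pasm; rewrite rowsum_full.
by case: eqP => _ [] ->; rewrite ?mulr0 ?mulr1 ?ler01 ?lexx ?lerN10.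
Qed.

Lemma pasm_off_skew_ge0 (A : M) : is_pasm A ->
  0 <= \sum_(i < m.+1) \sum_(j < n.+1 | off_skew i j) colsum A i j.
Proof.
by move=> A_pasm; do 2!apply: sumr_ge0 => ? _; apply/zero_one_ge0/pasm_colsum.
Qed.

Lemma pasm_row_signs (A : M) : is_pasm A ->
  \sum_(i < m.+1) (if i == 0 :> nat then 1 else -1) * \sum_j A i j <= 1.
Proof.
move=> A_pasm; rewrite -[leRHS]sum_first_row.
by apply: ler_sum => i _; apply: pasm_row_sign.
Qed.

Lemma dotm_skew_normal_le1 (A : M) : is_pasm A -> dotm skew_normal A <= 1.
Proof.
move=> A_pasm; rewrite dotm_skew_normal.
by have := pasm_off_skew_ge0 A_pasm; have := pasm_row_signs A_pasm; lra.
Qed.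

Lemma dotm_skew_normal_eq1 (A : M) : is_pasm A -> dotm skew_normal A = 1 ->
  (forall i : 'I_m.+1, \sum_j A i j = (i == 0 :> nat)%:R) /\
  (forall (i : 'I_m.+1) (j : 'I_n.+1), off_skew i j -> colsum A i j = 0).
Proof.
move=> A_pasm; rewrite dotm_skew_normal => value1.
have rows := pasm_row_signs A_pasm.
have off_ge0 := pasm_off_skew_ge0 A_pasm.
split=> [i | i j off_ij].
  have sum_eq : \sum_(i < m.+1) (if i == 0 :> nat then 1 else -1) * \sum_j A i j
      = \sum_(i < m.+1) ((i == 0 :> nat)%:R : R) by rewrite sum_first_row; lra.
  have := ler_sum_eq (fun i => pasm_row_sign i A_pasm) sum_eq i.
  by case: eqP => _ /=; rewrite ?mul1r // mulN1r => /eqP; rewrite oppr_eq0 => /eqP.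
have off0 : \sum_(i < m.+1) \sum_(j < n.+1 | off_skew i j) colsum A i j = 0 by lra.
have colsum_ge0 (k : 'I_m.+1) l : true -> 0 <= colsum A k l.
  by move=> _; apply/zero_one_ge0/pasm_colsum.
have row_ge0 (k : 'I_m.+1) : true -> 0 <= \sum_(j < n.+1 | off_skew k j) colsum A k j.
  by move=> _; apply: sumr_ge0 => l _; apply: colsum_ge0.
have row0 := @psumr_eq0P _ _ _ _ row_ge0 off0 i isT.
exact: (@psumr_eq0P _ _ _ _ (fun l _ => colsum_ge0 i l isT) row0 j off_ij).
Qed.

Lemma Mmu_off_skew mu : is_partition mu -> part_sub lam mu -> part_sub mu nu ->
  forall (i : 'I_m.+1) (j : 'I_n.+1), off_skew i j ->
  colsum (Mmu R m.+1 n.+1 mu) i j = 0.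
Proof.
move=> mu_part lam_mu mu_nu i j; rewrite colsum_Mmu //.
by case: eqP => // ->; rewrite /off_skew ltnNge lam_mu ltnNge mu_nu.
Qed.

Lemma skew_face_points (A : M) : is_pasm A /\ dotm skew_normal A = 1 <->
  exists mu, is_partition mu /\ part_sub lam mu /\ part_sub mu nu /\ A = Mmu R m.+1 n.+1 mu.
Proof.
split=> [[A_pasm /(dotm_skew_normal_eq1 A_pasm) [row_sums off0]] |
          [mu [mu_part [lam_mu [mu_nu ->]]]]].
  have [mu [mu_part mu_size mu_lt A_eq]] := pasm_staircase A_pasm row_sums.
  suff in_skew k : (nth 0 lam k <= nth 0 mu k <= nth 0 nu k)%N.
    by exists mu; split=> //; split; [|split] => // k; case/andP: (in_skew k).
  case/andP: nu_box => nu_size _.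
  have [lt_k | ge_k] := ltnP k m.+1; last first.
    by rewrite !nth_default ?(leq_trans (size_part_sub lam_part lam_nu)) ?(leq_trans _ ge_k).
  have not_off : ~~ off_skew k (nth 0 mu k).
    apply/negP => /(off0 (Ordinal lt_k) (Ordinal (mu_lt (Ordinal lt_k)))) /eqP.
    by rewrite A_eq colsum_Mmu //= eqxx oner_eq0.
  by move: not_off; rewrite /off_skew negb_or -!leqNgt.
have mu0_lt : (nth 0 mu 0 < n.+1)%N.
  by case/andP: nu_box => _; apply: leq_trans (mu_nu 0).
split; first exact: Mmu_pasm.
rewrite dotm_skew_normal.
rewrite (eq_bigr _ (fun i _ => congr1 _ (Mmu_row_sums R mu_part mu0_lt i))).
rewrite [X in _ - X]big1 => [|i _]; last by rewrite big1 // => j; apply: Mmu_off_skew.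
rewrite subr0 -[RHS]sum_first_row; apply: eq_bigr => i _.
by case: eqP; rewrite ?mulr0 ?mulr1.
Qed.

Lemma skew_is_face : is_face (PASM R m.+1 n.+1) (PASM_skew R m.+1 n.+1 lam nu).
Proof.
apply: (conv_face (c := skew_normal) (b := 1)) => [A | A]; first exact: dotm_skew_normal_le1.
exact: iff_sym (skew_face_points A).
Qed.

Definition skew_cells : seq M :=
  [seq delta_mx i (inord j) | i <- enum 'I_m.+1,
                              j <- iota (nth 0 lam i) (nth 0 nu i - nth 0 lam i)].

Lemma size_skew_cells : size skew_cells = (sumn nu - sumn lam)%N.
Proof.
rewrite size_allpairs_dep (eq_map (fun i => size_iota _ _)) sumnE big_map big_enum /=.
case/andP: nu_box => nu_size _.
have lam_size := leq_trans (size_part_sub lam_part lam_nu) nu_size.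
by rewrite sumnB // (sumn_nth nu_size) (sumn_nth lam_size).
Qed.

Lemma outside_mx_sub_span mu : part_sub lam mu -> part_sub mu nu ->
  outside_mx mu - outside_mx lam \in <<skew_cells>>%VS.
Proof.
move=> lam_mu mu_nu; rewrite [X in X \in _]matrix_sum_delta.
apply: memv_suml => i _; apply: memv_suml => j _; rewrite !mxE.
have [lt_j | le_j] := ltnP j (nth 0 lam i).
  by rewrite leqNgt (leq_trans lt_j (lam_mu i)) subrr scale0r mem0v.
have [le_mu | lt_mu] := leqP (nth 0 mu i) j; first by rewrite subrr scale0r mem0v.
apply/memvZ/memv_span/allpairsPdep; exists i, (val j); split; first exact: mem_enum.
  by rewrite mem_iota le_j subnKC ?(leq_trans lt_mu (mu_nu i)).
by rewrite inord_val.
Qed.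

Lemma skew_corner_sum_span x : PASM_skew R m.+1 n.+1 lam nu x ->
  corner_sum x - outside_mx lam \in <<skew_cells>>%VS.
Proof.
move=> [k [p [w [skew_p [_ [w_sum1 ->]]]]]].
rewrite linear_sum -[outside_mx lam]scale1r -w_sum1 scaler_suml -sumrB.
apply: memv_suml => i _; rewrite linearZ /= -scalerBr; apply: memvZ.
have [mu [mu_part [lam_mu [mu_nu ->]]]] := skew_p i.
by rewrite corner_sum_Mmu //; apply: outside_mx_sub_span.
Qed.

Lemma skew_aff_indep_size s : (forall x, x \in s -> PASM_skew R m.+1 n.+1 lam nu x) ->
  aff_indep s -> (size s <= (sumn nu - sumn lam).+1)%N.
Proof.
case: s => [//|x0 s] skew_s /=; rewrite -free_map_corner_sum ltnS => /eqP free_s.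
have span_s : (<<map corner_sum [seq x - x0 | x <- s]>> <= <<skew_cells>>)%VS.
  apply/span_subvP => _ /mapP [_ /mapP [x x_s ->] ->].
  have -> : corner_sum (x - x0) =
      (corner_sum x - outside_mx lam) - (corner_sum x0 - outside_mx lam).
    by rewrite linearB opprB addrA subrK.
  by apply: memvB; apply/skew_corner_sum_span/skew_s; rewrite inE ?eqxx ?x_s ?orbT.
by have := leq_trans (dimvS span_s) (dim_span _); rewrite free_s !size_map size_skew_cells.
Qed.

Lemma outside_mx_chain nu' :
  is_partition nu' -> part_sub lam nu' -> part_in_box n m.+1 nu' ->
  exists Y, [/\ size Y = (sumn nu' - sumn lam)%N,
    forall mu, mu \in Y -> [/\ is_partition mu, part_sub lam mu & part_sub mu nu'] &
    free [seq outside_mx mu - outside_mx lam : M | mu <- Y]].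
Proof.
move sum_d : (sumn nu' - sumn lam)%N => d.
elim: d nu' sum_d => [|d IHd] nu' sum_d nu'_part lam_nu' nu'_box.
  by exists [::]; split=> //; apply: nil_free.
have lt_sum : (sumn lam < sumn nu')%N by lia.
have [nu'' [i [nu''_part lam_nu'' nu'_i nu''_nu']]] :=
  partition_remove_cell lam_part nu'_part lam_nu' lt_sum.
have nu''_sub : part_sub nu'' nu'.
  by move=> k; case: (eqVneq k i) => [-> | /nu''_nu' ->]; rewrite ?nu'_i.
have sum_nu' := sumn_nth_succ nu'_i nu''_nu'.
case/andP: nu'_box => nu'_size nu'_0.
have nu''_box : part_in_box n m.+1 nu''.
  rewrite /part_in_box (leq_trans (size_part_sub nu''_part nu''_sub)) //.
  exact: leq_trans (nu''_sub 0) nu'_0.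
have [Y [size_Y Y_sub free_Y]] := IHd nu'' ltac:(lia) nu''_part lam_nu'' nu''_box.
exists (nu' :: Y); split.
- by rewrite /= size_Y; lia.
- move=> mu; rewrite inE => /predU1P [-> | /Y_sub [mu_part lam_mu mu_nu'']]; first by split.
  by split=> // k; apply: leq_trans (mu_nu'' k) (nu''_sub k).
have lt_i : (i < m.+1)%N.
  apply: leq_trans nu'_size; rewrite ltnNge; apply/negP => /(nth_default 0).
  by rewrite nu'_i.
have lt_j : (nth 0 nu'' i < n.+1)%N.
  by have := nth_partition_geq nu'_part (leq0n i); lia.
rewrite /= free_cons free_Y andbT.
(* The removed cell separates nu' from every shape inside nu''. *)
apply: (entry_notin_span (i := Ordinal lt_i) (j := Ordinal lt_j)).
  move=> _ /mapP [mu /Y_sub [_ lam_mu mu_nu''] ->].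
  by rewrite !mxE /= mu_nu'' lam_nu'' subrr.
by rewrite !mxE /= nu'_i ltnn lam_nu'' sub0r oppr_eq0 oner_eq0.
Qed.

Lemma skew_aff_dim :
  aff_dim (PASM_skew R m.+1 n.+1 lam nu) (part_size nu - part_size lam).
Proof.
split=> [|s size_s skew_s]; last first.
  by apply/negP => /(skew_aff_indep_size skew_s); rewrite size_s ltnn.
have [Y [size_Y Y_sub free_Y]] := outside_mx_chain nu_part lam_nu nu_box.
exists (Mmu R m.+1 n.+1 lam :: [seq Mmu R m.+1 n.+1 mu | mu <- Y]); split; [|split].
- by rewrite /= size_map size_Y.
- move=> x; rewrite inE => /predU1P [-> | /mapP [mu /Y_sub [mu_part lam_mu mu_nu] ->]].
    by apply: conv1; exists lam; do !split=> //.
  by apply: conv1; exists mu.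
rewrite /= -free_map_corner_sum -!map_comp.
rewrite (eq_in_map _ (fun mu => outside_mx mu - outside_mx lam : M) Y).1 // => mu.
case/Y_sub => mu_part _ _.
by rewrite /= linearB /= !corner_sum_Mmu.
Qed.

End Skew.

Theorem theorem2 (R : realFieldType) (m n : nat) (lam nu : seq nat) :
  (1 <= m)%N -> (1 <= n)%N ->
  is_partition lam -> is_partition nu ->
  part_sub lam nu -> part_in_box n.-1 m.-1 nu ->
  is_face (PASM R m n) (PASM_skew R m n lam nu) /\
  aff_dim (PASM_skew R m n lam nu) (part_size nu - part_size lam).
Proof.
case: m => [//|m] _; case: n => [//|n] _ lam_part nu_part lam_nu /andP[nu_size nu0].
have nu_box : part_in_box n m.+1 nu by rewrite /part_in_box nu0 leqW.
by split; [apply: skew_is_face | apply: skew_aff_dim].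
Qed.
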